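(* Let $S$ be a monoid. Then (1) the ternary commutator $[1,1,1]$ is the smallest congruence $\delta$ of $S$ such that $S/\delta$ embeds into a $2$-nilpotent group; (2) $[1,1,1]$ equals the smallest cancellative congruence of $S$ containing $[[1,1],1]\vee[1,[1,1]]$, equals the smallest cancellative congruence containing $[[1,1],1]$, and equals the smallest cancellative congruence containing $\rho_2$.
   Context: Commutators are those of the semigroup $(S,\cdot)$: for congruences $\alpha_1,\dots,\alpha_k$, $M(\alpha_1,\dots,\alpha_k)$ is the subsemigroup of $S^{\{0,1\}^k}$ generated by all $g$ such that for some $i$ and $(a,b)\in\alpha_i$, $g(x)=a$ if $x_i=0$ and $g(x)=b$ if $x_i=1$; $[\alpha_1,\dots,\alpha_k]$ is the smallest congruence $\delta$ such that for all $f\in M(\alpha_1,\dots,\alpha_k)$: if $(f(x0),f(x1))\in\delta$ for all $x\in\{0,1\}^{k-1}\setminus\{(1,\dots,1)\}$ then $(f(1,\dots,1,0),f(1,\dots,1,1))\in\delta$. $1$ is the total congruence. A congruence $\sigma$ is cancellative if $S/\sigma$ is cancellative. $q_1(x,y,z)=xy$, $q_2(x,y,z)=xyz_1yx$, and $\rho_2$ is the congruence generated by all pairs $(xyz_1yx,\ yxz_1xy)$ with $x,y,z_1\in S$. A $2$-nilpotent group has nilpotency class at most $2$. *)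

From mathcomp Require Import all_boot.
Set Implicit Arguments. Unset Strict Implicit. Unset Printing Implicit Defensive.

Definition rel_total (S : Type) : S -> S -> Prop := fun _ _ => True.

Definition rel_eq (S : Type) (R1 R2 : S -> S -> Prop) : Prop :=
  forall x y, R1 x y <-> R2 x y.

Definition rel_sub (S : Type) (R1 R2 : S -> S -> Prop) : Prop :=
  forall x y, R1 x y -> R2 x y.

Definition is_congruence (S : Type) (mul : S -> S -> S) (R : S -> S -> Prop) : Prop :=
  (forall x, R x x) /\ (forall x y, R x y -> R y x) /\
  (forall x y z, R x y -> R y z -> R x z) /\
  (forall a b c d, R a b -> R c d -> R (mul a c) (mul b d)).

Definition cong_gen (S : Type) (mul : S -> S -> S) (R : S -> S -> Prop) : S -> S -> Prop :=
  fun x y => forall d, is_congruence mul d -> rel_sub R d -> d x y.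

Definition cong_join (S : Type) (mul : S -> S -> S) (a b : S -> S -> Prop) : S -> S -> Prop :=
  cong_gen mul (fun x y => a x y \/ b x y).

Definition cancellative (S : Type) (mul : S -> S -> S) (R : S -> S -> Prop) : Prop :=
  (forall a x y, R (mul a x) (mul a y) -> R x y) /\
  (forall a x y, R (mul x a) (mul y a) -> R x y).

Definition canc_cong_gen (S : Type) (mul : S -> S -> S) (R : S -> S -> Prop) : S -> S -> Prop :=
  fun x y => forall d, is_congruence mul d -> cancellative mul d -> rel_sub R d -> d x y.

(* M(al_1, ..., al_k): subsemigroup of S^{{0,1}^k} generated by the
   "al_i-generators"; points of {0,1}^k are functions 'I_k -> bool,
   coordinate i (0-based) corresponds to al_{i+1}. *)
Inductive inM (S : Type) (mul : S -> S -> S) (k : nat) (al : 'I_k -> S -> S -> Prop)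
  : (('I_k -> bool) -> S) -> Prop :=
| M_gen (i : 'I_k) (a b : S) (f : ('I_k -> bool) -> S) :
    al i a b -> (forall x, f x = if x i then b else a) -> inM mul al f
| M_mul (f g h : ('I_k -> bool) -> S) :
    inM mul al f -> inM mul al g -> (forall x, h x = mul (f x) (g x)) -> inM mul al h.

(* the point (y, b) of {0,1}^(n+1): first n coordinates y, last coordinate b *)
Definition cube_ext (n : nat) (y : 'I_n -> bool) (b : bool) : 'I_n.+1 -> bool :=
  fun i => if unlift ord_max i is Some j then y j else b.

Definition comm_closed (S : Type) (mul : S -> S -> S) (n : nat)
  (al : 'I_n.+1 -> S -> S -> Prop) (d : S -> S -> Prop) : Prop :=
  forall f, inM mul al f ->
    (forall y : 'I_n -> bool, (exists j, y j = false) ->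
        d (f (cube_ext y false)) (f (cube_ext y true))) ->
    d (f (cube_ext (fun _ => true) false)) (f (cube_ext (fun _ => true) true)).

Definition commutator (S : Type) (mul : S -> S -> S) (n : nat)
  (al : 'I_n.+1 -> S -> S -> Prop) : S -> S -> Prop :=
  fun x y => forall d, is_congruence mul d -> comm_closed mul al d -> d x y.

Definition comm2 (S : Type) (mul : S -> S -> S) (a b : S -> S -> Prop) : S -> S -> Prop :=
  @commutator S mul 1 (fun i : 'I_2 => if val i == 0 then a else b).

Definition comm3 (S : Type) (mul : S -> S -> S) (a b c : S -> S -> Prop) : S -> S -> Prop :=
  @commutator S mul 2 (fun i : 'I_3 => match val i with 0 => a | 1 => b | _ => c end).

Definition rho2 (S : Type) (mul : S -> S -> S) : S -> S -> Prop :=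
  cong_gen mul (fun u v => exists x y z,
     u = mul x (mul y (mul z (mul y x))) /\ v = mul y (mul x (mul z (mul x y)))).

Definition is_group (G : Type) (gm : G -> G -> G) (g1 : G) (gi : G -> G) : Prop :=
  (forall x y z, gm x (gm y z) = gm (gm x y) z) /\
  (forall x, gm g1 x = x) /\ (forall x, gm x g1 = x) /\
  (forall x, gm (gi x) x = g1) /\ (forall x, gm x (gi x) = g1).

Definition gcomm (G : Type) (gm : G -> G -> G) (gi : G -> G) (x y : G) : G :=
  gm (gm (gi x) (gi y)) (gm x y).

Definition nilpotent2 (G : Type) (gm : G -> G -> G) (g1 : G) (gi : G -> G) : Prop :=
  forall x y z, gcomm gm gi (gcomm gm gi x y) z = g1.

(* S/d embeds into a 2-nilpotent group: an injective semigroup homomorphism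
   S/d -> G, i.e. a homomorphism phi : S -> G whose kernel is exactly d *)
Definition embeds_2nil_group (S : Type) (mul : S -> S -> S) (d : S -> S -> Prop) : Prop :=
  exists (G : Type) (gm : G -> G -> G) (g1 : G) (gi : G -> G),
    is_group gm g1 gi /\ nilpotent2 gm g1 gi /\
    exists phi : S -> G,
      (forall a b, phi (mul a b) = gm (phi a) (phi b)) /\
      (forall a b, phi a = phi b <-> d a b).

(* Let phi be a homomorphism of S into a 2-nilpotent group.  For f in M(1,1,1) the
   difference Delta(y) = (phi f(y,0))^-1 phi f(y,1) along the last coordinate has the
   form D c(y), with c central and affine on the square {0,1}^2: multiplying f by f'
   only changes c by y |-> [D, phi f'(y,0)], and [D, -] is a homomorphism into the
   centre.  Hence Delta = 1 at three corners of the square forces Delta = 1 at the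
   fourth, so ker phi satisfies the closure condition defining [1,1,1].  In dimension one the same computation shows that [1,1]
   relates elements whose images differ by a central factor, which puts [[1,1],1] and
   [1,[1,1]] in ker phi as well.
   Conversely, [1,1,1] is cancellative and contains rho_2.  If r is a cancellative
   congruence containing rho_2, then S/r satisfies the Malcev identity
   xyzyx = yxzxy, whose instance z = 1 is the right Ore condition; the group of right
   fractions of S/r is generated by the image of S, on which the Malcev identity holds,
   so it is 2-nilpotent.  Since [[1,1],1] contains rho_2, a cancellative congruence
   containing any of the three relations of (2) contains [1,1,1]. *)

From mathcomp Require Import all_boot.
From Stdlib Require Import Setoid Morphisms ProofIrrelevance FunctionalExtensionality
  PropExtensionality IndefiniteDescription.
Set Implicit Arguments. Unset Strict Implicit.

Lemma meet_congruence S (mul : S -> S -> S) (P : (S -> S -> Prop) -> Prop) :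
  is_congruence mul (fun x y => forall d, is_congruence mul d -> P d -> d x y).
Proof.
split=> [x d [d_refl _] _|]; first exact: d_refl.
split=> [x y dxy d d_cong Pd|].
  by have [_ [d_sym _]] := d_cong; exact: d_sym (dxy _ d_cong Pd).
split=> [x y z dxy dyz d d_cong Pd|a b c d' dab dcd d d_cong Pd].
  by have [_ [_ [d_trans _]]] := d_cong; apply: d_trans (dxy _ d_cong Pd) (dyz _ d_cong Pd).
by have [_ [_ [_ d_mul]]] := d_cong; apply: d_mul (dab _ d_cong Pd) (dcd _ d_cong Pd).
Qed.

Lemma commutator_congruence S (mul : S -> S -> S) n (al : 'I_n.+1 -> S -> S -> Prop) :
  is_congruence mul (commutator mul al).
Proof. exact: meet_congruence. Qed.

Lemma commutator_sub S (mul : S -> S -> S) n (al : 'I_n.+1 -> S -> S -> Prop) d :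
  is_congruence mul d -> comm_closed mul al d -> rel_sub (commutator mul al) d.
Proof. by move=> d_cong d_closed x y; apply. Qed.

Lemma cong_gen_sub S (mul : S -> S -> S) (R d : S -> S -> Prop) :
  is_congruence mul d -> rel_sub R d -> rel_sub (cong_gen mul R) d.
Proof. by move=> d_cong Rd x y; apply. Qed.

Lemma sub_cong_gen S (mul : S -> S -> S) (R : S -> S -> Prop) : rel_sub R (cong_gen mul R).
Proof. by move=> x y Rxy d _; apply. Qed.

Lemma cube_ext_lift n (y : 'I_n -> bool) b t : cube_ext y b (lift ord_max t) = y t.
Proof. by rewrite /cube_ext liftK. Qed.

Lemma cube_ext_max n (y : 'I_n -> bool) b : cube_ext y b ord_max = b.
Proof. by rewrite /cube_ext unlift_none. Qed.

Lemma ord_maxVlift n (t : 'I_n.+1) : t = ord_max \/ exists t', t = lift ord_max t'.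
Proof. by case: (unliftP ord_max t) => [t' ->|->]; [right; exists t' | left]. Qed.

Lemma ord2_cases (t : 'I_2) : t = ord0 \/ t = ord_max.
Proof. by case: t => [[|[|]]] // lt_t2; [left | right]; apply: val_inj. Qed.

Lemma exists_false_ord1 (y : 'I_1 -> bool) : (exists j, y j = false) -> y ord0 = false.
Proof. by case=> j; rewrite (ord1 j). Qed.

Lemma exists_false_ord2 (y : 'I_2 -> bool) :
  (exists j, y j = false) -> y ord0 = false \/ y ord_max = false.
Proof. by case=> j; case: (ord2_cases j) => <-; [left | right]. Qed.

Definition pt00 : 'I_2 -> bool := fun _ => false.
Definition pt01 : 'I_2 -> bool := fun t => t == ord_max.
Definition pt10 : 'I_2 -> bool := fun t => t == ord0.
Definition pt11 : 'I_2 -> bool := fun _ => true.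

Section Group.
Variables (G : Type) (gm : G -> G -> G) (g1 : G) (gi : G -> G).
Hypothesis G_group : is_group gm g1 gi.
Local Infix "⊗" := gm (at level 40, left associativity).
Local Notation "x ^-1" := (gi x).
Local Notation "[~ x , y ]" := (gcomm gm gi x y).

Lemma mulgA x y z : x ⊗ (y ⊗ z) = x ⊗ y ⊗ z. Proof. by case: G_group. Qed.
Lemma mul1g x : g1 ⊗ x = x. Proof. by case: G_group => _ []. Qed.
Lemma mulg1 x : x ⊗ g1 = x. Proof. by case: G_group => _ [] _ []. Qed.
Lemma mulVg x : x^-1 ⊗ x = g1. Proof. by case: G_group => _ [] _ [] _ []. Qed.
Lemma mulgV x : x ⊗ x^-1 = g1. Proof. by case: G_group => _ [] _ [] _ []. Qed.
Lemma mulKg x y : x^-1 ⊗ (x ⊗ y) = y. Proof. by rewrite mulgA mulVg mul1g. Qed.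
Lemma mulKVg x y : x ⊗ (x^-1 ⊗ y) = y. Proof. by rewrite mulgA mulgV mul1g. Qed.
Lemma mulgK x y : y ⊗ x ⊗ x^-1 = y. Proof. by rewrite -mulgA mulgV mulg1. Qed.
Lemma mulgKV x y : y ⊗ x^-1 ⊗ x = y. Proof. by rewrite -mulgA mulVg mulg1. Qed.
Lemma mulgI x y z : x ⊗ y = x ⊗ z -> y = z.
Proof. by move=> eq_xy; rewrite -(mulKg x y) eq_xy mulKg. Qed.
Lemma mulIg x y z : y ⊗ x = z ⊗ x -> y = z.
Proof. by move=> eq_yx; rewrite -(mulgK x y) eq_yx mulgK. Qed.
Lemma invgK x : x^-1^-1 = x.
Proof. by apply: (@mulgI x^-1); rewrite mulgV mulVg. Qed.
Lemma invMg x y : (x ⊗ y)^-1 = y^-1 ⊗ x^-1.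
Proof. by apply: (@mulgI (x ⊗ y)); rewrite mulgV -mulgA (mulgA y) mulgV mul1g mulgV. Qed.
Lemma eq_mulVg1 x y : (x^-1 ⊗ y = g1) <-> x = y.
Proof. by split=> [eq1 | ->]; [rewrite -(mulKVg x y) eq1 mulg1 | exact: mulVg]. Qed.

Definition central c := forall x, c ⊗ x = x ⊗ c.

Lemma central1 : central g1. Proof. by move=> x; rewrite mul1g mulg1. Qed.
Lemma centralM a b : central a -> central b -> central (a ⊗ b).
Proof. by move=> ca cb x; rewrite -mulgA cb mulgA ca mulgA. Qed.
Lemma centralV a : central a -> central a^-1.
Proof. by move=> ca x; apply: (@mulgI a); rewrite mulKVg mulgA ca mulgK. Qed.
Lemma mulg_centralA a x y : central a -> x ⊗ a ⊗ y = x ⊗ y ⊗ a.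
Proof. by move=> ca; rewrite -mulgA ca mulgA. Qed.

Lemma mulg_central2A x y u v :
  central u -> x ⊗ u ⊗ (y ⊗ v) = x ⊗ y ⊗ (u ⊗ v).
Proof. by move=> cu; rewrite !mulgA (mulg_centralA _ _ cu). Qed.

Lemma central_mulIg x u : central u -> central (x ⊗ u) -> central x.
Proof. by move=> cu cxu; rewrite -(mulgK u x); apply: centralM => //; apply: centralV. Qed.

Definition affine2 (h : ('I_2 -> bool) -> G) := h pt11 ⊗ h pt00 = h pt01 ⊗ h pt10.

Lemma affine2_eq h h' : (forall y, h y = h' y) -> affine2 h -> affine2 h'.
Proof. by move=> eq_h; rewrite /affine2 !eq_h. Qed.

Lemma affine2M h h' : (forall y, central (h y)) -> (forall y, central (h' y)) ->
  affine2 h -> affine2 h' -> affine2 (fun y => h y ⊗ h' y).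
Proof.
by move=> ch ch' aff_h aff_h'; rewrite /affine2 mulg_central2A // aff_h aff_h' -mulg_central2A.
Qed.

Lemma affine2_coord (g : bool -> G) t :
  (forall s, central (g s)) -> affine2 (fun y => g (y t)).
Proof. by move=> cg; case: (ord2_cases t) => ->; rewrite /affine2 //= cg. Qed.

Lemma conjg_commg x g : g^-1 ⊗ x ⊗ g = x ⊗ [~ x, g].
Proof. by rewrite /gcomm mulgA mulKVg -mulgA. Qed.

Lemma commg_mulr_central x c g : central c -> [~ x ⊗ c, g] = [~ x, g].
Proof.
move=> cc; rewrite /gcomm invMg -(mulgA (c^-1)) (centralV cc) -!mulgA; congr (_ ⊗ _).
by rewrite (mulgA x) -cc -mulgA mulKg.
Qed.

Lemma ldivgM a a' b b' :
  (a ⊗ a')^-1 ⊗ (b ⊗ b') = a^-1 ⊗ b ⊗ [~ a^-1 ⊗ b, a'] ⊗ (a'^-1 ⊗ b').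
Proof.
rewrite -conjg_commg invMg !mulgA; congr (_ ⊗ _).
by rewrite -(mulgA _ a' (a'^-1)) mulgV mulg1 -!mulgA.
Qed.

Lemma commg_central_l c g : central c -> [~ c, g] = g1.
Proof. by move=> cc; rewrite /gcomm -invMg cc mulVg. Qed.

Lemma commgE x y : [~ x, y] = (y ⊗ x)^-1 ⊗ (x ⊗ y).
Proof. by rewrite /gcomm invMg. Qed.

Lemma mulg_commg x y : x ⊗ y = y ⊗ x ⊗ [~ x, y].
Proof. by rewrite commgE mulgA mulgV mul1g. Qed.

Definition commute_modZ x y := exists c, central c /\ x ⊗ y = y ⊗ x ⊗ c.

Lemma commute_modZ_sym x y : commute_modZ x y -> commute_modZ y x.
Proof. by case=> c [cc exy]; exists c^-1; split; [apply: centralV | rewrite exy mulgK]. Qed.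

Lemma commute_modZVl x y : commute_modZ x y -> commute_modZ x^-1 y.
Proof.
case=> c [cc exy]; exists c^-1; split; first exact: centralV.
rewrite -(mulg_centralA _ _ (centralV cc)); apply: (@mulIg x); rewrite mulgKV.
by apply: (@mulgI x); rewrite !mulgA mulgV mul1g exy mulgK.
Qed.

Lemma commute_modZMr x y z :
  commute_modZ x y -> commute_modZ x z -> commute_modZ x (y ⊗ z).
Proof.
case=> c [cc exy] [c' [cc' exz]]; exists (c' ⊗ c); split; first exact: centralM.
by rewrite mulgA exy -mulgA (cc z) mulgA -(mulgA y) exz !mulgA (mulg_centralA _ _ cc').
Qed.

Lemma commute_ldiv A B v :
  A ⊗ B = B ⊗ A -> A ⊗ v ⊗ B = B ⊗ v ⊗ A -> B^-1 ⊗ A ⊗ v = v ⊗ (B^-1 ⊗ A).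
Proof.
move=> AB AvB; apply: (@mulgI B); rewrite !mulgA mulgV mul1g.
by apply: (@mulIg B); rewrite AvB -!mulgA AB mulKg.
Qed.

Lemma commute_invr K u : K ⊗ u = u ⊗ K -> K ⊗ u^-1 = u^-1 ⊗ K.
Proof. by move=> Ku; apply: (@mulgI u); rewrite mulgA -Ku mulgK mulKVg. Qed.

Lemma nilpotent2_of_malcev (T : G -> Prop) :
  T g1 -> (forall X, exists t s, T t /\ T s /\ X = t ⊗ s^-1) ->
  (forall x y z, T x -> T y -> T z -> x ⊗ y ⊗ z ⊗ y ⊗ x = y ⊗ x ⊗ z ⊗ x ⊗ y) ->
  nilpotent2 gm g1 gi.
Proof.
move=> T1 T_gen malcev.
have commT t s : T t -> T s -> commute_modZ t s.
  move=> Tt Ts; exists [~ t, s]; split; last exact: mulg_commg.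
  rewrite commgE; set A := t ⊗ s; set B := s ⊗ t.
  have AB : A ⊗ B = B ⊗ A by have := malcev t s g1 Tt Ts T1; rewrite !mulg1 -!mulgA.
  have AvB v : T v -> A ⊗ v ⊗ B = B ⊗ v ⊗ A.
    by move=> Tv; have := malcev t s v Tt Ts Tv; rewrite -!mulgA.
  move=> X; have [w [u [Tw [Tu ->]]]] := T_gen X.
  have Kv v : T v -> B^-1 ⊗ A ⊗ v = v ⊗ (B^-1 ⊗ A).
    by move=> Tv; apply: commute_ldiv => //; apply: AvB.
  by rewrite mulgA Kv // -mulgA commute_invr ?Kv // mulgA.
have commTX t X : T t -> commute_modZ t X.
  move=> Tt; have [u [w [Tu [Tw ->]]]] := T_gen X.
  apply: commute_modZMr (commT _ _ Tt Tu) _.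
  by apply/commute_modZ_sym/commute_modZVl/commute_modZ_sym/commT.
have commXY X Y : commute_modZ X Y.
  have [t [s [Tt [Ts ->]]]] := T_gen X; apply: commute_modZ_sym.
  apply: commute_modZMr; apply: commute_modZ_sym; first exact: commTX.
  by apply: commute_modZVl; apply: commTX.
move=> X Y Z; have [c [cc eXY]] := commXY X Y.
have -> : [~ X, Y] = c by rewrite commgE eXY mulKg.
exact: commg_central_l.
Qed.

Section Homomorphism.
Variables (S : Type) (mul : S -> S -> S) (phi : S -> G).
Hypothesis phiM : forall a b, phi (mul a b) = phi a ⊗ phi b.

Lemma ker_congruence : is_congruence mul (fun a b => phi a = phi b).
Proof.
split=> [//|]; split=> [x y -> //|]; split=> [x y z -> -> //|a b c d eq_ab eq_cd].
by rewrite !phiM eq_ab eq_cd.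
Qed.

Definition eq_modZ a b := central ((phi a)^-1 ⊗ phi b).

Lemma eq_modZ_congruence : is_congruence mul eq_modZ.
Proof.
split=> [a|]; first by rewrite /eq_modZ mulVg; apply: central1.
split=> [a b|]; first by rewrite /eq_modZ => /centralV; rewrite invMg invgK.
split=> [a b c cab cbc|a b c d cab ccd].
  by rewrite /eq_modZ -(mulKVg (phi b) (phi c)) mulgA; apply: centralM.
by rewrite /eq_modZ !phiM ldivgM commg_central_l // mulg1; apply: centralM.
Qed.

Lemma inM_shift_central k (al : 'I_k -> S -> S -> Prop) t f :
  rel_sub (al t) eq_modZ -> inM mul al f ->
  exists C, central C /\ forall x x', x t = false -> x' t = true ->
    (forall i, i != t -> x' i = x i) -> phi (f x') = phi (f x) ⊗ C.
Proof.
move=> alZ; elim=> [s a b {}f al_ab def_f |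
    f1 f2 {}f _ [C1 [cC1 eq1]] _ [C2 [cC2 eq2]] def_f].
  case: (eqVneq s t) => [est | nst].
    exists ((phi a)^-1 ⊗ phi b); split; first by apply: alZ; rewrite -est.
    by move=> x x' xt x't _; rewrite !def_f est xt x't mulKVg.
  exists g1; split=> [|x x' _ _ eqx]; first exact: central1.
  by rewrite !def_f eqx // mulg1.
exists (C1 ⊗ C2); split=> [|x x' xt x't eqx]; first exact: centralM.
by rewrite !def_f !phiM (eq1 x x') // (eq2 x x') // mulg_central2A.
Qed.

Lemma comm2_sub_ker_l (al be : S -> S -> Prop) :
  rel_sub al eq_modZ -> rel_sub (comm2 mul al be) (fun a b => phi a = phi b).
Proof.
move=> alZ; apply: commutator_sub; first exact: ker_congruence.
move=> f fM hyp; set t : 'I_2 := lift ord_max ord0.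
have [C [_ shiftC]] := inM_shift_central (t := t) alZ fM.
have shift_b s : phi (f (cube_ext (fun _ => true) s)) =
    phi (f (cube_ext (fun _ => false) s)) ⊗ C.
  apply: shiftC; rewrite ?cube_ext_lift // => i.
  by case: (ord_maxVlift i) => [-> | [i' ->]]; rewrite ?cube_ext_max // ord1 eqxx.
by rewrite !shift_b (hyp (fun _ => false) (ex_intro _ ord0 erefl)).
Qed.

Lemma comm2_sub_ker_r (al be : S -> S -> Prop) :
  rel_sub be eq_modZ -> rel_sub (comm2 mul al be) (fun a b => phi a = phi b).
Proof.
move=> beZ; apply: commutator_sub; first exact: ker_congruence.
move=> f fM hyp.
have [C [_ shiftC]] := inM_shift_central (t := ord_max) beZ fM.
have shift_y y : phi (f (cube_ext y true)) = phi (f (cube_ext y false)) ⊗ C.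
  apply: shiftC; rewrite ?cube_ext_max // => i.
  by case: (ord_maxVlift i) => [-> | [i' ->]]; rewrite ?eqxx // !cube_ext_lift.
have C1 : C = g1.
  apply: (@mulgI (phi (f (cube_ext (fun _ => false) false)))).
  by rewrite -shift_y mulg1 (hyp (fun _ => false) (ex_intro _ ord0 erefl)).
by rewrite shift_y C1 mulg1.
Qed.

Definition cube_diff n (F : ('I_n.+1 -> bool) -> G) (y : 'I_n -> bool) :=
  (F (cube_ext y false))^-1 ⊗ F (cube_ext y true).

Lemma cube_diffM n (F F' : ('I_n.+1 -> bool) -> G) y :
  cube_diff (fun x => F x ⊗ F' x) y =
  cube_diff F y ⊗ [~ cube_diff F y, F' (cube_ext y false)] ⊗ cube_diff F' y.
Proof. exact: ldivgM. Qed.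

Section Nilpotent2.
Hypothesis G_nil : nilpotent2 gm g1 gi.

Lemma central_commg x y : central [~ x, y].
Proof.
move=> z; have := G_nil x y z; set c := [~ x, y].
by rewrite /gcomm -invMg => /eq_mulVg1 <-.
Qed.

Lemma commgMr x y z : [~ x, y ⊗ z] = [~ x, y] ⊗ [~ x, z].
Proof.
have -> : [~ x, y ⊗ z] = x^-1 ⊗ z^-1 ⊗ (y^-1 ⊗ x ⊗ y) ⊗ z.
  by rewrite /gcomm invMg !mulgA.
rewrite conjg_commg mulgA (mulg_centralA _ _ (central_commg x y)) -(mulgA _ x z).
by rewrite central_commg.
Qed.

Lemma cube_diff_decomp n (al : 'I_n.+1 -> S -> S -> Prop)
    (P : (('I_n -> bool) -> G) -> Prop) :
  P (fun _ => g1) ->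
  (forall h h', (forall y, central (h y)) -> (forall y, central (h' y)) ->
     P h -> P h' -> P (fun y => h y ⊗ h' y)) ->
  (forall f D, inM mul al f -> P (fun y => [~ D, phi (f (cube_ext y false))])) ->
  forall f, inM mul al f -> exists D c, (forall y, central (c y)) /\ P c /\
    forall y, cube_diff (fun x => phi (f x)) y = D ⊗ c y.
Proof.
move=> P1 PM Pcomm f; elim=> [t a b {}f _ def_f|
    f1 f2 {}f f1M [D1 [c1 [cc1 [Pc1 eq1]]]] f2M [D2 [c2 [cc2 [Pc2 eq2]]]] def_f].
  case: (ord_maxVlift t) => [et | [t' et]].
  - exists ((phi a)^-1 ⊗ phi b), (fun _ => g1).
    split=> [y|]; [exact: central1 | split=> // y].
    by rewrite /cube_diff !def_f et !cube_ext_max mulg1.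
  - exists g1, (fun _ => g1).
    split=> [y|]; [exact: central1 | split=> // y].
    by rewrite /cube_diff !def_f et !cube_ext_lift mulVg mulg1.
set k := fun y => [~ D1, phi (f2 (cube_ext y false))].
have ck y : central (k y) by apply: central_commg.
exists (D1 ⊗ D2), (fun y => c1 y ⊗ k y ⊗ c2 y).
have ckc y : central (c1 y ⊗ k y) by apply: centralM.
split=> [y|]; first by apply: centralM.
split; first exact: (PM _ _ ckc cc2 (PM _ _ cc1 ck Pc1 (Pcomm _ _ f2M)) Pc2).
move=> y; have -> : cube_diff (fun x => phi (f x)) y =
    cube_diff (fun x => phi (f1 x) ⊗ phi (f2 x)) y by rewrite /cube_diff !def_f !phiM.
by rewrite cube_diffM eq1 eq2 commg_mulr_central // -(mulgA D1) mulg_central2A.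
Qed.

Lemma commutator2_sub_eq_modZ (al : 'I_2 -> S -> S -> Prop) :
  rel_sub (commutator mul al) eq_modZ.
Proof.
apply: commutator_sub; first exact: eq_modZ_congruence.
move=> f fM hyp.
have [D [c [cc [_ eqD]]]] := cube_diff_decomp (P := fun _ => True) I
  (fun _ _ _ _ _ _ => I) (fun _ _ _ => I) fM.
have c0 : central (cube_diff (fun x => phi (f x)) (fun _ => false)).
  exact: hyp (ex_intro _ ord0 erefl).
suff : central (cube_diff (fun x => phi (f x)) (fun _ => true)) by [].
rewrite eqD in c0; rewrite eqD; exact: centralM (central_mulIg (cc _) c0) (cc _).
Qed.

Lemma face_commg_affine2 (al : 'I_3 -> S -> S -> Prop) f D :
  inM mul al f -> affine2 (fun y => [~ D, phi (f (cube_ext y false))]).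
Proof.
elim=> [t a b {}f _ def_f | f1 f2 {}f _ aff1 _ aff2 def_f].
  case: (ord_maxVlift t) => [et | [t' et]].
    by rewrite /affine2 !def_f et !cube_ext_max.
  apply: (@affine2_eq (fun y => [~ D, phi (if y t' then b else a)])) => [y|].
    by rewrite def_f et cube_ext_lift.
  exact: (@affine2_coord (fun s => [~ D, phi (if s then b else a)]) _
    (fun s => central_commg _ _)).
apply: affine2_eq (affine2M _ _ aff1 aff2) => [y|y|y]; try exact: central_commg.
by rewrite def_f phiM commgMr.
Qed.

Lemma commutator3_sub_ker (al : 'I_3 -> S -> S -> Prop) :
  rel_sub (commutator mul al) (fun a b => phi a = phi b).
Proof.
apply: commutator_sub; first exact: ker_congruence.
move=> f fM hyp.
have [D [c [cc [aff_c eqD]]]] := cube_diff_decomp (P := affine2)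
  (erefl (g1 ⊗ g1)) affine2M (fun f D fM => face_commg_affine2 D fM) fM.
have diff1 y : (exists j, y j = false) -> D ⊗ c y = g1.
  by move=> /hyp /eq_mulVg1; rewrite /cube_diff in eqD; rewrite eqD.
have d00 : D ⊗ c pt00 = g1 by apply: diff1; exists ord0.
have d01 : D ⊗ c pt01 = g1 by apply: diff1; exists ord0.
have d10 : D ⊗ c pt10 = g1 by apply: diff1; exists ord_max.
have c10 : c pt10 = c pt00 by apply: (@mulgI D); rewrite d10 d00.
have c11 : c pt11 = c pt01 by apply: (@mulIg (c pt00)); rewrite aff_c c10.
by apply/eq_mulVg1; move: (eqD pt11); rewrite /cube_diff => ->; rewrite c11.
Qed.

End Nilpotent2.
End Homomorphism.
End Group.

Section Monoid.
Variables (S : Type) (mul : S -> S -> S) (e : S).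
Hypothesis mulA : forall x y z, mul x (mul y z) = mul (mul x y) z.
Hypothesis mul1s : forall x, mul e x = x.
Hypothesis muls1 : forall x, mul x e = x.
Local Infix "·" := mul (at level 40, left associativity).
Local Notation rt := (@rel_total S).
Local Notation T3 := (comm3 mul rt rt rt).

Definition cube_gen k (t : 'I_k) (a b : S) (x : 'I_k -> bool) := if x t then b else a.

Lemma inM_gen k (al : 'I_k -> S -> S -> Prop) t a b :
  al t a b -> inM mul al (cube_gen t a b).
Proof. by move=> al_ab; apply: (M_gen mul al_ab (fun _ => erefl)). Qed.

Lemma inM_mul k (al : 'I_k -> S -> S -> Prop) f g :
  inM mul al f -> inM mul al g -> inM mul al (fun x => f x · g x).
Proof. by move=> fM gM; apply: (M_mul fM gM (fun _ => erefl)). Qed.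

Local Ltac monoid_norm := rewrite ?mul1s ?muls1 -?mulA ?mul1s ?muls1 -?mulA.
Local Ltac cube_eval := rewrite /cube_gen ?cube_ext_lift ?cube_ext_max /=; monoid_norm.

Lemma comm2_mulC x a : comm2 mul rt rt (x · a) (a · x).
Proof.
move=> d [d_refl _] d_closed.
pose f (w : 'I_2 -> bool) := cube_gen ord_max x e w ·
  (cube_gen (lift ord_max ord0) e a w · cube_gen ord_max e x w).
have fM : inM mul (fun i : 'I_2 => if val i == 0 then rt else rt) f.
  by apply: inM_mul; [|apply: inM_mul]; apply: inM_gen.
suff : d (f (cube_ext (fun _ => true) false)) (f (cube_ext (fun _ => true) true)).
  by rewrite /f; cube_eval.
apply: d_closed fM _ => w /exists_false_ord1 w0.
by rewrite /f; cube_eval; rewrite w0; monoid_norm.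
Qed.

Lemma comm2_malcev x y z :
  comm2 mul (comm2 mul rt rt) rt (x · (y · (z · (y · x)))) (y · (x · (z · (x · y)))).
Proof.
move=> d [d_refl _] d_closed.
pose f (w : 'I_2 -> bool) := cube_gen ord_max e (y · (x · z)) w ·
  (cube_gen (lift ord_max ord0) (y · x) (x · y) w · cube_gen ord_max (z · (y · x)) e w).
have fM : inM mul (fun i : 'I_2 => if val i == 0 then comm2 mul rt rt else rt) f.
  by apply: inM_mul; [|apply: inM_mul]; apply: inM_gen => //=; apply: comm2_mulC.
suff : d (f (cube_ext (fun _ => true) false)) (f (cube_ext (fun _ => true) true)).
  by rewrite /f; cube_eval.
apply: d_closed fM _ => w /exists_false_ord1 w0.
by rewrite /f; cube_eval; rewrite w0; monoid_norm.
Qed.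

Lemma comm3_cancel_l a x y : T3 (a · x) (a · y) -> T3 x y.
Proof.
move=> Tax d d_cong d_closed; have dax := Tax d d_cong d_closed.
have [d_refl [_ [_ d_mul]]] := d_cong.
pose f (w : 'I_3 -> bool) := cube_gen (lift ord_max ord0) a e w ·
  (cube_gen (lift ord_max ord_max) a e w · cube_gen ord_max x y w).
have fM : inM mul (fun i : 'I_3 => match val i with 0 => rt | 1 => rt | _ => rt end) f.
  by apply: inM_mul; [|apply: inM_mul]; apply: inM_gen.
suff : d (f (cube_ext (fun _ => true) false)) (f (cube_ext (fun _ => true) true)).
  by rewrite /f; cube_eval.
apply: d_closed fM _ => w /exists_false_ord2 [] w0; rewrite /f; cube_eval; rewrite w0;
  by case: (w _) => /=; monoid_norm; [| apply: d_mul].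
Qed.

Lemma comm3_cancel_r a x y : T3 (x · a) (y · a) -> T3 x y.
Proof.
move=> Txa d d_cong d_closed; have dxa := Txa d d_cong d_closed.
have [d_refl [_ [_ d_mul]]] := d_cong.
have dxaa := d_mul _ _ _ _ dxa (d_refl a); rewrite -!mulA in dxaa.
pose f (w : 'I_3 -> bool) := cube_gen ord_max x y w ·
  (cube_gen (lift ord_max ord0) a e w · cube_gen (lift ord_max ord_max) a e w).
have fM : inM mul (fun i : 'I_3 => match val i with 0 => rt | 1 => rt | _ => rt end) f.
  by apply: inM_mul; [|apply: inM_mul]; apply: inM_gen.
suff : d (f (cube_ext (fun _ => true) false)) (f (cube_ext (fun _ => true) true)).
  by rewrite /f; cube_eval.
apply: d_closed fM _ => w /exists_false_ord2 [] w0; rewrite /f; cube_eval; rewrite w0;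
  by case: (w _) => /=; monoid_norm.
Qed.

Lemma comm3_malcev x y z : T3 (x · (y · (z · (y · x)))) (y · (x · (z · (x · y)))).
Proof.
move=> d [d_refl _] d_closed.
pose i : 'I_3 := lift ord_max ord0; pose j : 'I_3 := lift ord_max ord_max.
pose f (w : 'I_3 -> bool) := cube_gen ord_max e (y · (x · z)) w ·
  (cube_gen i y e w · (cube_gen j e x w · (cube_gen i e y w ·
  (cube_gen j x e w · cube_gen ord_max (z · (y · x)) e w)))).
have fM : inM mul (fun i : 'I_3 => match val i with 0 => rt | 1 => rt | _ => rt end) f.
  by do 5!(apply: inM_mul; first exact: inM_gen); apply: inM_gen.
suff : d (f (cube_ext (fun _ => true) false)) (f (cube_ext (fun _ => true) true)).
  by rewrite /f /i /j; cube_eval.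
apply: d_closed fM _ => w /exists_false_ord2 [] w0; rewrite /f /i /j; cube_eval;
  by rewrite w0; case: (w _) => /=; monoid_norm.
Qed.

End Monoid.

Section Fractions.
Variables (S : Type) (mul : S -> S -> S) (e : S).
Hypothesis mulA : forall x y z, mul x (mul y z) = mul (mul x y) z.
Hypothesis mul1s : forall x, mul e x = x.
Hypothesis muls1 : forall x, mul x e = x.
Local Infix "·" := mul (at level 40, left associativity).
Variable r : S -> S -> Prop.
Hypotheses (r_cong : is_congruence mul r) (r_canc : cancellative mul r).
Hypothesis r_malcev : forall x y z, r (x · (y · (z · (y · x)))) (y · (x · (z · (x · y)))).

#[local] Instance r_equiv : Equivalence r.
Proof. by case: r_cong => r_refl [r_sym [r_trans _]]; split. Qed.

#[local] Instance mul_r_proper : Proper (r ==> r ==> r) mul.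
Proof. by case: r_cong => _ [_ [_ r_mul]] a b rab c d rcd; apply: r_mul. Qed.

Definition ore_l b c := c · (c · b).
Definition ore_r b c := b · (b · c).

(* The right Ore condition for S/r is the Malcev identity with z = e. *)
Lemma r_ore b c : r (b · ore_l b c) (c · ore_r b c).
Proof. by have := r_malcev b c e; rewrite !mul1s. Qed.

(* The pair (a, b) stands for the right fraction a b^-1. *)
Definition frac_eqv (p q : S * S) :=
  exists u v, r (p.1 · u) (q.1 · v) /\ r (p.2 · u) (q.2 · v).

Lemma frac_eqv_refl p : frac_eqv p p.
Proof. by exists e, e; split; reflexivity. Qed.

Lemma frac_eqv_sym p q : frac_eqv p q -> frac_eqv q p.
Proof. by case=> u [v [r1 r2]]; exists v, u; split; symmetry. Qed.

Lemma frac_eqv_trans p q w : frac_eqv p q -> frac_eqv q w -> frac_eqv p w.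
Proof.
case=> u [v [r1 r2]] [u' [v' [r1' r2']]].
have ore_vu := r_ore v u'.
exists (u · ore_l v u'), (v' · ore_r v u'); rewrite !mulA.
split; [rewrite r1 | rewrite r2]; rewrite -!mulA ore_vu !mulA;
  [rewrite r1' | rewrite r2']; reflexivity.
Qed.

Lemma frac_eqv_r a a' b b' : r a a' -> r b b' -> frac_eqv (a, b) (a', b').
Proof. by move=> raa rbb; exists e, e; rewrite /= !muls1. Qed.

(* (a b^-1) (c d^-1) = (a s) (d t)^-1 for any s, t with b s = c t (frac_mul_eqv). *)
Definition frac_mul (p q : S * S) := (p.1 · ore_l p.2 q.1, q.2 · ore_r p.2 q.1).

Lemma frac_mul_eqv a b c d s t :
  r (b · s) (c · t) -> frac_eqv (frac_mul (a, b) (c, d)) (a · s, d · t).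
Proof.
move=> bs_ct; rewrite /frac_mul /=; have := r_ore b c.
move: (ore_l b c) (ore_r b c) => s0 t0 bs0_ct0.
have := r_ore t0 t; move: (ore_l t0 t) (ore_r t0 t) => m n tm_tn.
have sm_sn : r (s0 · m) (s · n).
  by apply: (proj1 r_canc b); rewrite !mulA bs0_ct0 bs_ct -!mulA tm_tn; reflexivity.
by exists m, n; rewrite /= -!mulA sm_sn tm_tn; split; reflexivity.
Qed.

Lemma frac_mul_eqvl p p' q : frac_eqv p p' -> frac_eqv (frac_mul p q) (frac_mul p' q).
Proof.
case: p p' q => [a b] [a' b'] [c d] [u [v /= [au_a'v bu_b'v]]].
have := r_ore (b · u) c; move: (ore_l _ _) (ore_r _ _) => s t ore_st.
apply: (@frac_eqv_trans _ (a · (u · s), d · t)).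
  by apply: frac_mul_eqv; rewrite mulA.
apply: (@frac_eqv_trans _ (a' · (v · s), d · t)).
  by apply: frac_eqv_r; rewrite ?mulA ?au_a'v; reflexivity.
by apply/frac_eqv_sym/frac_mul_eqv; rewrite mulA -bu_b'v.
Qed.

Lemma frac_mul_eqvr p q q' : frac_eqv q q' -> frac_eqv (frac_mul p q) (frac_mul p q').
Proof.
case: p q q' => [a b] [c d] [c' d'] [u [v /= [cu_c'v du_d'v]]].
have := r_ore b (c · u); move: (ore_l _ _) (ore_r _ _) => s t ore_st.
apply: (@frac_eqv_trans _ (a · s, d · (u · t))).
  by apply: frac_mul_eqv; rewrite mulA.
apply: (@frac_eqv_trans _ (a · s, d' · (v · t))).
  by apply: frac_eqv_r; rewrite ?mulA ?du_d'v; reflexivity.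
by apply/frac_eqv_sym/frac_mul_eqv; rewrite mulA -cu_c'v.
Qed.

Lemma frac_mul_eqv2 p p' q q' :
  frac_eqv p p' -> frac_eqv q q' -> frac_eqv (frac_mul p q) (frac_mul p' q').
Proof. by move=> pp' qq'; apply: frac_eqv_trans (frac_mul_eqvl _ pp') (frac_mul_eqvr _ qq'). Qed.

Lemma frac_mulA p q w : frac_eqv (frac_mul p (frac_mul q w)) (frac_mul (frac_mul p q) w).
Proof.
case: p q w => [a b] [c d] [x y].
rewrite [frac_mul (a, b) (c, d)]/frac_mul /=; have := r_ore b c.
move: (ore_l b c) (ore_r b c) => s t bs_ct.
rewrite [frac_mul (_, d · t) _]/frac_mul /=; have := r_ore (d · t) x.
move: (ore_l _ x) (ore_r _ x) => s' t' dts_xt.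
apply: (@frac_eqv_trans _ (frac_mul (a, b) (c · (t · s'), y · t'))).
  by apply/frac_mul_eqvr/frac_mul_eqv; rewrite mulA.
apply: (@frac_eqv_trans _ (a · (s · s'), y · t' · e)).
  by apply: frac_mul_eqv; rewrite muls1 !mulA bs_ct; reflexivity.
by apply: frac_eqv_r; rewrite ?muls1 ?mulA; reflexivity.
Qed.

Lemma frac_mul1l p : frac_eqv (frac_mul (e, e) p) p.
Proof.
case: p => c d; apply: frac_eqv_trans (frac_mul_eqv _ _ (s := c) (t := e) _) _.
  by rewrite mul1s muls1; reflexivity.
by rewrite mul1s muls1; apply: frac_eqv_refl.
Qed.

Lemma frac_mul1r p : frac_eqv (frac_mul p (e, e)) p.
Proof.
case: p => a b; apply: frac_eqv_trans (frac_mul_eqv _ _ (s := e) (t := b) _) _.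
  by rewrite mul1s muls1; reflexivity.
by rewrite mul1s muls1; apply: frac_eqv_refl.
Qed.

Lemma frac_eqv_diag b : frac_eqv (b, b) (e, e).
Proof. by exists e, b; rewrite /= muls1 mul1s; split; reflexivity. Qed.

Lemma frac_mulVl p : frac_eqv (frac_mul (p.2, p.1) p) (e, e).
Proof.
case: p => a b; apply: frac_eqv_trans (frac_mul_eqv _ _ (s := e) (t := e) _) _.
  by reflexivity.
by rewrite muls1; apply: frac_eqv_diag.
Qed.

Lemma frac_mulVr p : frac_eqv (frac_mul p (p.2, p.1)) (e, e).
Proof.
case: p => a b; apply: frac_eqv_trans (frac_mul_eqv _ _ (s := e) (t := e) _) _.
  by reflexivity.
by rewrite muls1; apply: frac_eqv_diag.
Qed.

Lemma frac_eqv_swap p q : frac_eqv p q -> frac_eqv (p.2, p.1) (q.2, q.1).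
Proof. by case=> u [v [r1 r2]]; exists u, v. Qed.

Definition frac := {P : S * S -> Prop | exists p, P = frac_eqv p}.

Definition frac_of p : frac := exist _ (frac_eqv p) (ex_intro _ p erefl).

Definition frac_repr (X : frac) : S * S :=
  proj1_sig (constructive_indefinite_description _ (proj2_sig X)).

Lemma frac_inj (X Y : frac) : proj1_sig X = proj1_sig Y -> X = Y.
Proof.
by case: X Y => [P P_cls] [Q Q_cls] /= PQ; subst Q; congr exist; apply: proof_irrelevance.
Qed.

Lemma frac_reprK X : frac_of (frac_repr X) = X.
Proof.
apply: frac_inj; rewrite /frac_repr; case: constructive_indefinite_description => p /= ->.
by case: X.
Qed.

Lemma frac_of_eq p q : frac_eqv p q -> frac_of p = frac_of q.
Proof.
move=> pq; apply: frac_inj; apply: functional_extensionality => w.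
apply: propositional_extensionality.
by split; [apply: frac_eqv_trans (frac_eqv_sym pq) | apply: frac_eqv_trans pq].
Qed.

Lemma frac_of_inj p q : frac_of p = frac_of q -> frac_eqv p q.
Proof. by move/(f_equal (@proj1_sig _ _)) => /= ->; apply: frac_eqv_refl. Qed.

Lemma frac_repr_eqv p : frac_eqv (frac_repr (frac_of p)) p.
Proof. exact/frac_of_inj/frac_reprK. Qed.

Lemma frac_ind (P : frac -> Prop) : (forall p, P (frac_of p)) -> forall X, P X.
Proof. by move=> Pp X; rewrite -(frac_reprK X). Qed.

Definition frac_mulg (X Y : frac) := frac_of (frac_mul (frac_repr X) (frac_repr Y)).
Definition frac_invg (X : frac) := frac_of ((frac_repr X).2, (frac_repr X).1).
Definition frac_1 := frac_of (e, e).

Lemma frac_mulg_of p q : frac_mulg (frac_of p) (frac_of q) = frac_of (frac_mul p q).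
Proof. by apply/frac_of_eq/frac_mul_eqv2; apply: frac_repr_eqv. Qed.

Lemma frac_invg_of p : frac_invg (frac_of p) = frac_of (p.2, p.1).
Proof. exact/frac_of_eq/frac_eqv_swap/frac_repr_eqv. Qed.

Lemma frac_group : is_group frac_mulg frac_1 frac_invg.
Proof.
split.
  elim/frac_ind => p; elim/frac_ind => q; elim/frac_ind => w.
  by rewrite !frac_mulg_of; apply/frac_of_eq/frac_mulA.
split; first by elim/frac_ind => p; rewrite frac_mulg_of; apply/frac_of_eq/frac_mul1l.
split; first by elim/frac_ind => p; rewrite frac_mulg_of; apply/frac_of_eq/frac_mul1r.
split.
  by elim/frac_ind => p; rewrite frac_invg_of frac_mulg_of; apply/frac_of_eq/frac_mulVl.
by elim/frac_ind => p; rewrite frac_invg_of frac_mulg_of; apply/frac_of_eq/frac_mulVr.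
Qed.

Definition frac_embed a := frac_of (a, e).

Lemma frac_embedM a b : frac_embed (a · b) = frac_mulg (frac_embed a) (frac_embed b).
Proof.
rewrite frac_mulg_of; apply/frac_of_eq/frac_eqv_sym.
apply: frac_eqv_trans (frac_mul_eqv _ _ (s := b) (t := e) _) _.
  by rewrite mul1s muls1; reflexivity.
by rewrite muls1; apply: frac_eqv_refl.
Qed.

Lemma frac_embed_eq a b : frac_embed a = frac_embed b <-> r a b.
Proof.
split=> [/frac_of_inj [u [v /= [au_bv u_v]]] | rab].
  by rewrite !mul1s in u_v; apply: (proj2 r_canc u); rewrite au_bv u_v; reflexivity.
by apply/frac_of_eq/frac_eqv_r; last reflexivity.
Qed.

Lemma frac_nilpotent2 : nilpotent2 frac_mulg frac_1 frac_invg.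
Proof.
apply: (nilpotent2_of_malcev frac_group (T := fun X => exists a, X = frac_embed a)).
- by exists e.
- elim/frac_ind => [[a b]]; exists (frac_embed a), (frac_embed b).
  split; first by exists a.
  split; first by exists b.
  rewrite /frac_embed frac_invg_of frac_mulg_of; apply/frac_of_eq/frac_eqv_sym.
  apply: frac_eqv_trans (frac_mul_eqv _ _ (s := e) (t := e) _) _; first by reflexivity.
  by rewrite !muls1; apply: frac_eqv_refl.
- move=> _ _ _ [x ->] [y ->] [z ->]; rewrite -!frac_embedM; apply/frac_embed_eq.
  by have := r_malcev x y z; rewrite !mulA.
Qed.

Lemma embeds_of_malcev : embeds_2nil_group mul r.
Proof.
exists frac, frac_mulg, frac_1, frac_invg; split; first exact: frac_group.
split; first exact: frac_nilpotent2.
by exists frac_embed; split; [exact: frac_embedM | exact: frac_embed_eq].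
Qed.

End Fractions.

Section Characterizations.
Variables (S : Type) (mul : S -> S -> S) (e : S).
Hypothesis mulA : forall x y z, mul x (mul y z) = mul (mul x y) z.
Hypothesis mul1s : forall x, mul e x = x.
Hypothesis muls1 : forall x, mul x e = x.
Local Infix "·" := mul (at level 40, left associativity).
Local Notation rt := (@rel_total S).
Local Notation T3 := (comm3 mul rt rt rt).

Lemma comm3_congruence : is_congruence mul T3.
Proof. exact: commutator_congruence. Qed.

Lemma rho2_sub d : is_congruence mul d ->
  (forall x y z, d (x · (y · (z · (y · x)))) (y · (x · (z · (x · y))))) ->
  rel_sub (rho2 mul) d.
Proof. by move=> d_cong d_malcev; apply: cong_gen_sub => // _ _ [x [y [z [-> ->]]]]. Qed.

Lemma rho2_malcev x y z : rho2 mul (x · (y · (z · (y · x)))) (y · (x · (z · (x · y)))).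
Proof. by apply: sub_cong_gen; exists x, y, z. Qed.

Lemma comm3_cancellative : cancellative mul T3.
Proof. by split=> a x y; [apply: comm3_cancel_l | apply: comm3_cancel_r]. Qed.

Lemma embeds_sub_comm3 d : embeds_2nil_group mul d -> rel_sub T3 d.
Proof.
case=> G [gm [g1 [gi [G_group [G_nil [phi [phiM ker_phi]]]]]]] x y T3xy.
exact/ker_phi/(commutator3_sub_ker G_group phiM G_nil T3xy).
Qed.

Lemma embeds_of_cancellative d : is_congruence mul d -> cancellative mul d ->
  rel_sub (rho2 mul) d -> embeds_2nil_group mul d.
Proof.
move=> d_cong d_canc rho2d; apply: (embeds_of_malcev mulA mul1s muls1 d_cong d_canc).
by move=> x y z; apply: rho2d; apply: rho2_malcev.
Qed.

Lemma rho2_sub_comm3 : rel_sub (rho2 mul) T3.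
Proof. by apply: rho2_sub; [exact: comm3_congruence | exact: comm3_malcev]. Qed.

Lemma comm3_embeds : embeds_2nil_group mul T3.
Proof.
exact: embeds_of_cancellative comm3_congruence comm3_cancellative rho2_sub_comm3.
Qed.

Lemma comm2_sub_comm3_l : rel_sub (comm2 mul (comm2 mul rt rt) rt) T3.
Proof.
have [G [gm [g1 [gi [G_group [G_nil [phi [phiM ker_phi]]]]]]]] := comm3_embeds.
have modZ := commutator2_sub_eq_modZ G_group phiM G_nil.
by move=> x y /(comm2_sub_ker_l G_group phiM (modZ _)) /ker_phi.
Qed.

Lemma comm2_sub_comm3_r : rel_sub (comm2 mul rt (comm2 mul rt rt)) T3.
Proof.
have [G [gm [g1 [gi [G_group [G_nil [phi [phiM ker_phi]]]]]]]] := comm3_embeds.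
have modZ := commutator2_sub_eq_modZ G_group phiM G_nil.
by move=> x y /(comm2_sub_ker_r G_group phiM (modZ _)) /ker_phi.
Qed.

Lemma rho2_sub_of_comm2 d : is_congruence mul d ->
  rel_sub (comm2 mul (comm2 mul rt rt) rt) d -> rel_sub (rho2 mul) d.
Proof. by move=> d_cong Rd; apply: rho2_sub => // x y z; apply: Rd; apply: comm2_malcev. Qed.

Lemma cong_join_sub_comm3 :
  rel_sub (cong_join mul (comm2 mul (comm2 mul rt rt) rt) (comm2 mul rt (comm2 mul rt rt))) T3.
Proof.
apply: cong_gen_sub comm3_congruence _ => x y [].
  exact: comm2_sub_comm3_l.
exact: comm2_sub_comm3_r.
Qed.

Lemma rho2_sub_of_cong_join d : is_congruence mul d ->
  rel_sub (cong_join mul (comm2 mul (comm2 mul rt rt) rt) (comm2 mul rt (comm2 mul rt rt))) d ->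
  rel_sub (rho2 mul) d.
Proof.
move=> d_cong Jd; apply: rho2_sub_of_comm2 => // x y Rxy.
by apply: Jd; apply: sub_cong_gen; left.
Qed.

Lemma comm3_eq_canc_cong_gen Q : rel_sub Q T3 ->
  (forall d, is_congruence mul d -> cancellative mul d -> rel_sub Q d -> rel_sub (rho2 mul) d) ->
  rel_eq T3 (canc_cong_gen mul Q).
Proof.
move=> QT3 Q_rho2 x y; split=> [T3xy d d_cong d_canc Qd | Qxy].
  have d_embeds := embeds_of_cancellative d_cong d_canc (Q_rho2 _ d_cong d_canc Qd).
  exact: embeds_sub_comm3 d_embeds _ _ T3xy.
exact: Qxy _ comm3_congruence comm3_cancellative QT3.
Qed.

End Characterizations.

Theorem corollary4p7 (S : Type) (mul : S -> S -> S) (e : S)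
  (mulA : forall x y z, mul x (mul y z) = mul (mul x y) z)
  (mul1s : forall x, mul e x = x) (muls1 : forall x, mul x e = x) :
  (* (1) *)
  (embeds_2nil_group mul (comm3 mul (@rel_total S) (@rel_total S) (@rel_total S)) /\
   forall d, is_congruence mul d -> embeds_2nil_group mul d ->
     rel_sub (comm3 mul (@rel_total S) (@rel_total S) (@rel_total S)) d) /\
  (* (2) *)
  (rel_eq (comm3 mul (@rel_total S) (@rel_total S) (@rel_total S))
     (canc_cong_gen mul
        (cong_join mul (comm2 mul (comm2 mul (@rel_total S) (@rel_total S)) (@rel_total S))
                       (comm2 mul (@rel_total S) (comm2 mul (@rel_total S) (@rel_total S))))) /\
   rel_eq (comm3 mul (@rel_total S) (@rel_total S) (@rel_total S))
     (canc_cong_gen mul (comm2 mul (comm2 mul (@rel_total S) (@rel_total S)) (@rel_total S))) /\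
   rel_eq (comm3 mul (@rel_total S) (@rel_total S) (@rel_total S))
     (canc_cong_gen mul (rho2 mul))).
Proof.
split; first by split=> [|d _]; [exact: comm3_embeds | exact: embeds_sub_comm3].
split; [|split]; apply: (comm3_eq_canc_cong_gen mulA mul1s muls1).
- exact: cong_join_sub_comm3.
- by move=> d d_cong _; apply: rho2_sub_of_cong_join.
- exact: comm2_sub_comm3_l.
- by move=> d d_cong _; apply: rho2_sub_of_comm2.
- exact: rho2_sub_comm3.
- by [].
Qed.
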